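(* Let $\mathcal H$ be any class of group-aware hypotheses $\mathcal X\times\{A,B\}\to\{0,1\}$ and $\mathcal D$ any distribution over $\mathcal X\times\{A,B\}\times\{0,1\}$. Assume there is an integer $c\ge1$ such that for each group $g\in\{A,B\}$, $\Pr_{\mathcal D}[y=1\wedge x\in g]\ge\Pr_{\mathcal D}[x\in g]/c$, and that both groups have positive probability. Suppose $h^*\in\mathcal H$ minimizes $\Pr_{\mathcal D}[h(x,z)\ne y]$ over all $h\in\mathcal H$ satisfying Equal Opportunity on $\mathcal D$. Then there are constants $C>0$, $\alpha_0\in(0,1)$ depending only on $c$ such that for every $\alpha\in[0,\alpha_0]$ and every corrupted distribution $\widetilde{\mathcal D}=(1-\alpha)\mathcal D+\alpha\mathcal Q$ ($\mathcal Q$ arbitrary), a robust fair-ERM learner for the Equal Opportunity constraint returns a hypothesis $\hat h$ in the $(P,Q)$-randomized expansion $\mathcal{PQ}(\mathcal H)$ satisfying Equal Opportunity on $\widetilde{\mathcal D}$ and $$\Big|\mathbb E_{\mathcal D}[\mathbf 1(\hat h(x,z)\ne y)]-\mathbb E_{\mathcal D}[\mathbf 1(h^*(x,z)\ne y)]\Big|\le C\sqrt\alpha;$$ that is, such a hypothesis exists in $\mathcal{PQ}(\mathcal H)$.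
   Context: Equal Opportunity of a (possibly randomized) hypothesis $h$ on a distribution: $\Pr[h(x,z)=1\mid y=1,z=A]=\Pr[h(x,z)=1\mid y=1,z=B]$, probabilities also over the hypothesis's randomness. $\mathcal{PQ}(\mathcal H)$ consists of randomized hypotheses obtained from some $h\in\mathcal H$ and parameters $p_A,q_A,p_B,q_B\in[0,1]$ that on input $(x,z)$ output $h(x,z)$ with probability $1-p_z$ and otherwise an independent $\mathrm{Bernoulli}(q_z)$ bit. Errors of randomized hypotheses are expected errors. *)

From HB Require Import structures.
From mathcomp Require Import all_boot all_order all_algebra.
From mathcomp Require Import all_classical all_reals all_analysis.
Set Implicit Arguments. Unset Strict Implicit. Unset Printing Implicit Defensive.
Import Order.TTheory GRing.Theory Num.Theory numFieldNormedType.Exports.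
Local Open Scope classical_set_scope.
Local Open Scope ring_scope.

(* Conventions:
   - the group attribute z ranges over bool, with group A := false, B := true;
   - a labelled example is a triple ((x, z), y) : X * bool * bool,
     with label y = true meaning y = 1;
   - a (group-aware) hypothesis is h : X -> bool -> bool. *)

Section Defs.
Context (R : realType) (d : measure_display) (X : measurableType d).

Definition example := (X * bool * bool)%type.

(* The (P,Q)-randomized hypothesis built from h and p_A,q_A,p_B,q_B:
   with probability 1 - p_z outputs h(x,z), otherwise an independent
   Bernoulli(q_z) bit.  p and q are indexed by the group (false = A,
   true = B). *)
Record pq_hyp := PQHyp {
  pq_base : X -> bool -> bool;
  pq_p : bool -> R;
  pq_q : bool -> R }.

Definition pq_prob1 (r : pq_hyp) (x : X) (z : bool) : R :=
  (1 - pq_p r z) * (pq_base r x z)%:R + pq_p r z * pq_q r z.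

Definition det_hyp (h : X -> bool -> bool) : pq_hyp :=
  PQHyp h (fun _ => 0) (fun _ => 0).

Definition PQ (H : set (X -> bool -> bool)) : set pq_hyp :=
  [set r | H (pq_base r) /\
           (forall g, 0 <= pq_p r g <= 1) /\ (forall g, 0 <= pq_q r g <= 1)].

Definition pq_err (D : probability example R) (r : pq_hyp) : R :=
  \int[D]_(s in [set: example])
     (if s.2 then 1 - pq_prob1 r s.1.1 s.1.2 else pq_prob1 r s.1.1 s.1.2).

Definition pos_grp (g : bool) : set example := [set s | s.2 && (s.1.2 == g)].
Definition grp (g : bool) : set example := [set s | s.1.2 == g].

Definition pq_tpr (D : probability example R) (r : pq_hyp) (g : bool) : R :=
  (\int[D]_(s in pos_grp g) pq_prob1 r s.1.1 s.1.2) / fine (D (pos_grp g)).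

Definition equal_opportunity (D : probability example R) (r : pq_hyp) : Prop :=
  pq_tpr D r false = pq_tpr D r true.

End Defs.

Arguments det_hyp {R d X} h.
Arguments grp {d} X g.
Arguments pos_grp {d} X g.

(* The clean part of the corrupted distribution Dt = (1 - a) D + a Q preserves
   the common true-positive rate t of h* on D, so on Dt the rate of h* in group g
   moves away from t by at most 2a / Pr_D[y = 1, z = g].  Equal Opportunity on Dt
   is restored by randomizing h* in a single group m only: with probability p it
   outputs the constant bit 0 or 1, pulling that group's rate towards the other
   one.  Moving the group of smaller positive mass costs p Pr_D[y = 1, z = m]
   <= 4 sqrt a, unless its rate is already within sqrt a of the constant it is
   pulled towards; then the gap is below sqrt a and moving the other group costs
   p <= 2 sqrt a.  Randomizing on group m changes the expected error by at most
   p Pr_D[z = m] <= c p Pr_D[y = 1, z = m] <= 4 c sqrt a. *)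

From HB Require Import structures.
From mathcomp Require Import all_boot all_order all_algebra.
From mathcomp Require Import all_classical all_reals all_analysis.
From mathcomp Require Import ring lra.
Set Implicit Arguments. Unset Strict Implicit. Unset Printing Implicit Defensive.
Import Order.TTheory GRing.Theory Num.Theory numFieldNormedType.Exports.
Local Open Scope classical_set_scope.
Local Open Scope ring_scope.

Section RateEqualization.
Variable R : realFieldType.
Implicit Types (u v k : R).

Lemma mix_toward0 v u k : 0 <= u <= v -> 0 <= k -> v - u <= k * v ->
  exists2 p, 0 <= p <= 1 & (1 - p) * v = u /\ p <= k.
Proof.
move=> /andP[u0 uv] k0 gap; have [v0|v_neq0] := eqVneq v 0.
  by exists 0; [rewrite lexx ler01 | split; lra].
have v_gt0 : 0 < v by rewrite lt_neqAle eq_sym v_neq0; lra.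
exists ((v - u) / v); last split.
- by rewrite divr_ge0 ?ler_pdivrMr /=; lra.
- by field; rewrite gt_eqF.
- by rewrite ler_pdivrMr.
Qed.

Lemma mix_toward1 v u k : v <= u <= 1 -> 0 <= k -> u - v <= k * (1 - v) ->
  exists2 p, 0 <= p <= 1 & (1 - p) * v + p = u /\ p <= k.
Proof.
move=> /andP[vu u1] k0 gap.
have [||p p01 [eq_p pk]] := @mix_toward0 (1 - v) (1 - u) k _ k0.
- by apply/andP; split; lra.
- by rewrite (_ : 1 - v - (1 - u) = u - v) //; ring.
by exists p => //; split=> //; lra.
Qed.

Lemma equalize_ordered_rates (tH tL PH PL s : R) :
  0 <= s -> s <= 1/2 -> 0 <= tL -> tL <= tH -> tH <= 1 ->
  0 < PH -> PH <= 1 -> 0 < PL -> PL <= 1 ->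
  PH * (tH - tL) <= 4 * s ^+ 2 \/ PL * (tH - tL) <= 4 * s ^+ 2 ->
  (exists2 p, 0 <= p <= 1 & (1 - p) * tH = tL /\ p * PH <= 4 * s) \/
  (exists2 p, 0 <= p <= 1 & (1 - p) * tL + p = tH /\ p * PL <= 4 * s).
Proof.
move=> s0 s12 tL0 tLH tH1 PH0 PH1 PL0 PL1 [gap|gap].
- have [s_tH|tH_s] := leP s tH.
  + left; have [|||p p01 [eq_p pk]] := @mix_toward0 tH tL (4 * s / PH).
    * by rewrite tL0.
    * by rewrite divr_ge0 //; lra.
    * by rewrite mulrAC ler_pdivlMr; nra.
    by exists p => //; rewrite -ler_pdivlMr.
  + right; have [|||p p01 [eq_p pk]] := @mix_toward1 tL tH (2 * s); try nra.
    by exists p => //; split => //; case/andP: p01; nra.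
- have [tL_s|s_tL] := leP tL (1 - s).
  + right; have [|||p p01 [eq_p pk]] := @mix_toward1 tL tH (4 * s / PL).
    * by rewrite tLH.
    * by rewrite divr_ge0 //; lra.
    * by rewrite mulrAC ler_pdivlMr; nra.
    by exists p => //; rewrite -ler_pdivlMr.
  + left; have [|||p p01 [eq_p pk]] := @mix_toward0 tH tL (2 * s); try nra.
    by exists p => //; split => //; case/andP: p01; nra.
Qed.

Lemma rate_gap_bound (tH tL PH PL t a : R) : tL <= tH -> 0 < PH -> 0 < PL ->
  `|PH * (tH - t)| <= 2 * a -> `|PL * (tL - t)| <= 2 * a ->
  PH * (tH - tL) <= 4 * a \/ PL * (tH - tL) <= 4 * a.
Proof.
move=> tLH PH0 PL0 /ler_normlP[devH devH'] /ler_normlP[devL devL'].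
have [PHL|PLH] := leP PH PL; [left|right]; have [tLt|ttL] := leP tL t; nra.
Qed.

Lemma equalize_rates (tau P : bool -> R) (t s : R) :
  0 <= s <= 1/2 -> (forall g, 0 <= tau g <= 1) -> (forall g, 0 < P g <= 1) ->
  (forall g, `|P g * (tau g - t)| <= 2 * s ^+ 2) ->
  exists m p q, [/\ 0 <= p <= 1, 0 <= q <= 1,
    (1 - p) * tau m + p * q = tau (~~ m) & p * P m <= 4 * s].
Proof.
move=> /andP[s0 s12] tau01 P01 dev.
suff equalize_from hi : tau (~~ hi) <= tau hi -> exists m p q, [/\ 0 <= p <= 1,
    0 <= q <= 1, (1 - p) * tau m + p * q = tau (~~ m) & p * P m <= 4 * s].
  by have [/(equalize_from true)|/ltW/(equalize_from false)] := leP (tau false) (tau true).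
move=> tLH; have /andP[PH0 PH1] := P01 hi; have /andP[PL0 PL1] := P01 (~~ hi).
have /andP[tL0 _] := tau01 (~~ hi); have /andP[_ tH1] := tau01 hi.
have gap := rate_gap_bound tLH PH0 PL0 (dev hi) (dev (~~ hi)).
have [[p p01 [eq_p pP]]|[p p01 [eq_p pP]]] :=
  equalize_ordered_rates s0 s12 tL0 tLH tH1 PH0 PH1 PL0 PL1 gap.
- by exists hi, p, 0; split; rewrite ?lexx ?ler01 ?mulr0 ?addr0.
- by exists (~~ hi), p, 1; split; rewrite ?lexx ?ler01 ?mulr1 ?negbK.
Qed.

Lemma mixture_ratio_dev (a P K Qp L t : R) :
  0 <= a <= 1/2 -> 0 < P -> 0 <= L <= Qp -> Qp <= 1 -> 0 <= t <= 1 -> K = t * P ->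
  [/\ 0 < (1 - a) * P + a * Qp,
      0 <= ((1 - a) * K + a * L) / ((1 - a) * P + a * Qp) <= 1 &
      `|P * (((1 - a) * K + a * L) / ((1 - a) * P + a * Qp) - t)| <= 2 * a].
Proof.
move=> /andP[a0 a12] P0 /andP[L0 LQ] Q1 /andP[t0 t1] ->.
have Pt0 : 0 < (1 - a) * P + a * Qp by nra.
set Pt := _ + _ in Pt0 *; set u := _ / Pt.
(* Since K = t P, only the corrupted mass contributes to the deviation. *)
have key : P * (u - t) * Pt = P * a * (L - t * Qp).
  by rewrite /u /Pt; field; rewrite gt_eqF.
have Pa0 : 0 <= P * a by rewrite mulr_ge0 // ltW.
split => //.
  have tP0 : 0 <= t * P by rewrite mulr_ge0 // ltW.
  have tP_le : t * P <= P by nra.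
  rewrite /u; apply/andP; split; first by rewrite divr_ge0 ?(ltW Pt0) //; nra.
  by rewrite ler_pdivrMr // /Pt; nra.
rewrite -(ler_pM2r Pt0) -(gtr0_norm Pt0) -normrM key normrM (ger0_norm Pa0).
have dev_le1 : `|L - t * Qp| <= 1 by rewrite ler_norml; apply/andP; split; nra.
apply: le_trans (ler_wpM2l Pa0 dev_le1) _.
by rewrite (gtr0_norm Pt0) mulr1 /Pt; nra.
Qed.

End RateEqualization.

Lemma measurable_fun_bool_branch d1 d2 (T1 : measurableType d1)
    (T2 : measurableType d2) (b : T1 -> bool) (f : bool -> T1 -> T2) :
  measurable_fun setT b -> (forall v, measurable_fun setT (f v)) ->
  measurable_fun setT (fun x => f (b x) x).
Proof.
move=> mb mf; rewrite (_ : (fun x => _) = fun x => if b x then f true x else f false x).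
  exact: measurable_fun_ifT.
by apply/funext => x; case: (b x).
Qed.

Lemma probability_fineK (R : realType) d (T : measurableType d)
    (mu : probability T R) (A : set T) :
  measurable A -> (fine (mu A))%:E = mu A.
Proof. by move=> mA; rewrite fineK // fin_num_measure. Qed.

Lemma fine_probability_ge0_le1 (R : realType) d (T : measurableType d)
    (mu : probability T R) (A : set T) :
  measurable A -> 0 <= fine (mu A) <= 1.
Proof.
move=> mA; rewrite fine_ge0 ?measure_ge0 //= -lee_fin probability_fineK //.
exact: probability_le1.
Qed.

Section Events.
Context (R : realType) (d : measure_display) (X : measurableType d).

Lemma measurable_fun_group_label d2 (T2 : measurableType d2)
    (F : bool -> bool -> T2) :
  measurable_fun setT (fun s : example X => F s.1.2 s.2).
Proof.
apply: (measurable_fun_bool_branch (f := fun z s => F z s.2)) => [|z].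
  exact: measurableT_comp measurable_snd measurable_fst.
apply: (measurable_fun_bool_branch (f := fun y _ => F z y)) => [|y].
  exact: measurable_snd.
exact: measurable_cst.
Qed.

Lemma measurable_grp g : measurable (grp X g).
Proof.
by have := measurable_fun_group_label (fun z _ => z == g) measurableT
  (I : measurable [set true]); rewrite setTI.
Qed.

Lemma measurable_pos_grp g : measurable (pos_grp X g).
Proof.
by have := measurable_fun_group_label (fun z y => y && (z == g)) measurableT
  (I : measurable [set true]); rewrite setTI.
Qed.

Lemma fine_pos_grp_bounds (mu : probability (example X) R) (c : nat) g :
  (0 < c)%N -> (mu (grp X g) / c%:R%:E <= mu (pos_grp X g))%E ->
  (0 < mu (grp X g))%E ->
  0 < fine (mu (pos_grp X g)) /\ fine (mu (grp X g)) <= c%:R * fine (mu (pos_grp X g)).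
Proof.
move=> c_gt0; have c0 : (0 : R) < c%:R by rewrite ltr0n.
rewrite -(probability_fineK mu (measurable_grp g)).
rewrite -(probability_fineK mu (measurable_pos_grp g)).
rewrite inver gt_eqF // -EFinM !(lee_fin, lte_fin) ler_pdivrMr // mulrC => le_pos N0.
by split => //; rewrite -(pmulr_rgt0 _ c0); exact: lt_le_trans le_pos.
Qed.

Section Prediction.
Variables (h : X -> bool -> bool)
  (hm : measurable_fun setT (fun p : X * bool => h p.1 p.2)).

Definition true_pos g : set (example X) :=
  [set s | h s.1.1 s.1.2] `&` pos_grp X g.

Lemma measurable_fun_group_label_pred d2 (T2 : measurableType d2)
    (F : bool -> bool -> bool -> T2) :
  measurable_fun setT (fun s : example X => F s.1.2 s.2 (h s.1.1 s.1.2)).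
Proof.
apply: (measurable_fun_bool_branch (f := fun v s => F s.1.2 s.2 v)) => [|v].
  exact: measurableT_comp hm measurable_fst.
exact: (measurable_fun_group_label (fun z y => F z y v)).
Qed.

Lemma measurable_group_label_pred (G : bool -> bool -> bool -> bool) :
  measurable [set s : example X | G s.1.2 s.2 (h s.1.1 s.1.2)].
Proof.
by have := measurable_fun_group_label_pred G measurableT
  (I : measurable [set true]); rewrite setTI.
Qed.

Lemma measurable_true_pos g : measurable (true_pos g).
Proof.
apply: measurableI (measurable_pos_grp g).
exact: (measurable_group_label_pred (fun _ _ v => v)).
Qed.

Definition pq_on_group (m : bool) (p q : R) : pq_hyp R X :=
  PQHyp h (fun g => if g == m then p else 0) (fun g => if g == m then q else 0).

Variable mu : probability (example X) R.

Lemma integrable_group_label_pred (F : bool -> bool -> bool -> R) A :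
  measurable A ->
  mu.-integrable A (EFin \o fun s => F s.1.2 s.2 (h s.1.1 s.1.2)).
Proof.
move=> mA; apply: measurable_bounded_integrable => //.
- by rewrite (le_lt_trans (probability_le1 mu mA)) ?ltry.
- exact: measurable_funTS (measurable_fun_group_label_pred F).
pose M := \sum_(o : bool * bool * bool) `|F o.1.1 o.1.2 o.2|.
exists M; split; first by rewrite num_real.
move=> M' /ltW M_le s _; apply: le_trans M_le.
rewrite /M (bigD1 (s.1.2, s.2, h s.1.1 s.1.2)) //= lerDl.
by apply: sumr_ge0 => *; exact: normr_ge0.
Qed.

Lemma fine_true_pos_bounds g :
  0 <= fine (mu (true_pos g)) <= fine (mu (pos_grp X g)).
Proof.
rewrite fine_ge0 ?measure_ge0 //= -lee_fin.
rewrite (probability_fineK mu (measurable_true_pos g)).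
rewrite (probability_fineK mu (measurable_pos_grp g)).
exact: measureIr (measurable_group_label_pred (fun _ _ v => v)) (measurable_pos_grp g).
Qed.

Lemma Rintegral_group_label_pred_indic (G : bool -> bool -> bool -> bool) A :
  measurable A ->
  \int[mu]_(s in A) (G s.1.2 s.2 (h s.1.1 s.1.2))%:R =
  fine (mu ([set s | G s.1.2 s.2 (h s.1.1 s.1.2)] `&` A)).
Proof.
move=> mA; rewrite /Rintegral -integral_indic //; last exact: measurable_group_label_pred.
congr fine; apply: eq_integral => s _; rewrite indicE.
congr (_%:R)%:E; case: (boolP (G _ _ _)) => Gs; first by rewrite mem_set.
by rewrite memNset //; apply/negP.
Qed.

Lemma Rintegral_group_label_pred_affine (G : bool -> bool -> bool -> bool) a b A :
  measurable A ->
  \int[mu]_(s in A) (a * (G s.1.2 s.2 (h s.1.1 s.1.2))%:R + b) =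
  a * fine (mu ([set s | G s.1.2 s.2 (h s.1.1 s.1.2)] `&` A)) + b * fine (mu A).
Proof.
move=> mA; rewrite RintegralD //; last 2 first.
- exact: (integrable_group_label_pred (fun z y v => a * (G z y v)%:R)).
- exact: (integrable_group_label_pred (fun _ _ _ => b)).
rewrite RintegralZl //; last exact: (integrable_group_label_pred (fun z y v => (G z y v)%:R)).
by rewrite Rintegral_group_label_pred_indic // Rintegral_cst.
Qed.

Lemma pq_tpr_det_hyp g : pq_tpr mu (det_hyp h) g =
  fine (mu (true_pos g)) / fine (mu (pos_grp X g)).
Proof.
rewrite /pq_tpr (Rintegral_group_label_pred_affine (fun _ _ v => v) (1 - 0) (0 * 0)).
  by rewrite subr0 mul1r !mul0r addr0.
exact: measurable_pos_grp.
Qed.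

Lemma pq_tpr_PQHyp (P Q : bool -> R) g : fine (mu (pos_grp X g)) != 0 ->
  pq_tpr mu (PQHyp h P Q) g = (1 - P g) * pq_tpr mu (det_hyp h) g + P g * Q g.
Proof.
move=> Pg_neq0; rewrite pq_tpr_det_hyp /pq_tpr.
rewrite (@eq_Rintegral _ _ _ mu _
  (fun s => (1 - P g) * (h s.1.1 s.1.2)%:R + P g * Q g)); last first.
  by move=> s; rewrite inE => /andP[_ /eqP <-].
rewrite (Rintegral_group_label_pred_affine (fun _ _ v => v)) //; last first.
  exact: measurable_pos_grp.
by field.
Qed.

Lemma pq_err_on_group m p q : 0 <= p <= 1 -> 0 <= q <= 1 ->
  `|pq_err mu (pq_on_group m p q) - pq_err mu (det_hyp h)| <=
  p * fine (mu (grp X m)).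
Proof.
move=> /andP[p0 p1] /andP[q0 q1].
pose err_at (P Q : bool -> R) z y v :=
  if y then 1 - ((1 - P z) * v%:R + P z * Q z) else (1 - P z) * v%:R + P z * Q z.
pose P g := if g == m then p else 0; pose Q g := if g == m then q else 0.
pose diff z y v := err_at P Q z y v - err_at (fun=> 0) (fun=> 0) z y v.
have -> : p * fine (mu (grp X m)) = \int[mu]_(s in setT) (p * (s.1.2 == m)%:R + 0).
  by rewrite (Rintegral_group_label_pred_affine (fun z _ _ => z == m)) // setIT mul0r addr0.
rewrite /pq_err -(RintegralB measurableT
  (integrable_group_label_pred (err_at P Q) measurableT)
  (integrable_group_label_pred (err_at (fun=> 0) (fun=> 0)) measurableT)).
apply: le_trans (le_normr_Rintegral measurableT
  (integrable_group_label_pred diff measurableT)) _.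
apply: le_Rintegral => //.
- exact: (integrable_group_label_pred (fun z y v => `|diff z y v|)).
- exact: (integrable_group_label_pred (fun z _ _ => p * (z == m)%:R + 0)).
move=> s _; rewrite /diff /err_at /P /Q; clear diff err_at P Q.
by case: m s.1.2 s.2 (h _ _) => [] [] [] [] /=; rewrite ler_norml; apply/andP; split; nra.
Qed.

Lemma equal_opportunity_on_group m p q :
  (forall g, fine (mu (pos_grp X g)) != 0) ->
  (1 - p) * pq_tpr mu (det_hyp h) m + p * q = pq_tpr mu (det_hyp h) (~~ m) ->
  equal_opportunity mu (pq_on_group m p q).
Proof.
move=> Pg_neq0 repaired.
have tpr g : pq_tpr mu (pq_on_group m p q) g =
    if g == m then pq_tpr mu (det_hyp h) (~~ m) else pq_tpr mu (det_hyp h) g.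
  rewrite pq_tpr_PQHyp //; cbv beta.
  by case: eqP => [->|_]; rewrite ?repaired // subr0 mul1r mul0r addr0.
by rewrite /equal_opportunity !tpr; case: m {repaired tpr}.
Qed.

End Prediction.

Section Corruption.
Variables (h : X -> bool -> bool)
  (hm : measurable_fun setT (fun p : X * bool => h p.1 p.2)).
Variables (D Q Dt : probability (example X) R) (a : R).
Hypothesis mixDt : forall A, measurable A ->
  Dt A = ((1 - a)%:E * D A + a%:E * Q A)%E.

Lemma fine_mixture A : measurable A ->
  fine (Dt A) = (1 - a) * fine (D A) + a * fine (Q A).
Proof.
move=> mA; rewrite mixDt // -(probability_fineK D mA) -(probability_fineK Q mA).
by rewrite -!EFinM -EFinD.
Qed.

Lemma corrupted_tpr_dev : 0 <= a <= 1/2 -> equal_opportunity D (det_hyp h) ->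
  (forall g, 0 < fine (D (pos_grp X g))) -> forall g,
  [/\ fine (Dt (pos_grp X g)) != 0, 0 <= pq_tpr Dt (det_hyp h) g <= 1 &
      `|fine (D (pos_grp X g)) *
        (pq_tpr Dt (det_hyp h) g - pq_tpr D (det_hyp h) false)| <= 2 * a].
Proof.
move=> a01 EO P0 g; set t := pq_tpr D (det_hyp h) false.
have t_tpr : t = pq_tpr D (det_hyp h) g by case: g; rewrite /t // EO.
have Kt : fine (D (true_pos h g)) = t * fine (D (pos_grp X g)).
  by rewrite t_tpr pq_tpr_det_hyp //; field; rewrite gt_eqF.
have t01 : 0 <= t <= 1.
  have /andP[K0 KP] := fine_true_pos_bounds hm D g.
  by rewrite t_tpr pq_tpr_det_hyp // divr_ge0 ?ler_pdivrMr ?mul1r // ltW.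
have /andP[_ Q1] := fine_probability_ge0_le1 Q (measurable_pos_grp g).
have [Pt0 u01 dev] := mixture_ratio_dev a01 (P0 g)
  (fine_true_pos_bounds hm Q g) Q1 t01 Kt.
rewrite pq_tpr_det_hyp // !fine_mixture; first by split; rewrite // gt_eqF.
- exact: measurable_true_pos.
- exact: measurable_pos_grp.
Qed.

End Corruption.
End Events.

Theorem mainTheorem7 (R : realType) (c : nat) (hc : (1 <= c)%N) :
  exists (C alpha0 : R), 0 < C /\ 0 < alpha0 < 1 /\
  forall (d : measure_display) (X : measurableType d)
         (H : set (X -> bool -> bool)) (D : probability (example X) R)
         (hstar : X -> bool -> bool),
    (forall h, H h -> measurable_fun [set: X * bool] (fun p => h p.1 p.2)) ->
    (forall g : bool, (D (grp X g) / c%:R%:E <= D (pos_grp X g))%E) ->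
    (forall g : bool, (0 < D (grp X g))%E) ->
    H hstar -> equal_opportunity D (det_hyp (R:=R) hstar) ->
    (forall h, H h -> equal_opportunity D (det_hyp (R:=R) h) ->
       pq_err D (det_hyp (R:=R) hstar) <= pq_err D (det_hyp (R:=R) h)) ->
    forall alpha : R, 0 <= alpha <= alpha0 ->
    forall (Q Dt : probability (example X) R),
      (forall A : set (example X), measurable A ->
         Dt A = ((1 - alpha)%:E * D A + alpha%:E * Q A)%E) ->
      exists r, PQ H r /\ equal_opportunity Dt r /\
        `| pq_err D r - pq_err D (det_hyp (R:=R) hstar) | <= C * Num.sqrt alpha.
Proof.
have c_gt0 : (0 : R) < c%:R by rewrite ltr0n.
exists (4 * c%:R), (1/4); split; first by rewrite mulr_gt0.
split; first lra.
move=> d X H D hs hmeas pos_frac grp_gt0 Hhs EO _ a /andP[a0 a14] Q Dt mixDt.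
have hm := hmeas hs Hhs.
have grp_size g := fine_pos_grp_bounds hc (pos_frac g) (grp_gt0 g).
have a12 : 0 <= a <= 1/2 by rewrite a0; lra.
have dev := corrupted_tpr_dev hm mixDt a12 EO (fun g => (grp_size g).1).
pose s := Num.sqrt a; have s0 : 0 <= s := sqrtr_ge0 a.
have s2 : s ^+ 2 = a by rewrite sqr_sqrtr.
have [|g|g|g|m [p [q [p01 q01 repaired pP]]]] :=
  @equalize_rates _ (pq_tpr Dt (det_hyp hs)) (fun g => fine (D (pos_grp X g)))
    (pq_tpr D (det_hyp hs) false) s.
- by rewrite s0 /=; nra.
- by case: (dev g).
- by rewrite (grp_size g).1; case/andP: (fine_probability_ge0_le1 D (measurable_pos_grp g)).
- by rewrite s2; case: (dev g).
exists (pq_on_group hs m p q); split; [|split].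
- rewrite /PQ /pq_on_group /=; split=> //.
  by split=> g; case: (g == m); rewrite ?lexx ?ler01.
- by apply: equal_opportunity_on_group => // g; case: (dev g).
apply: le_trans (pq_err_on_group hm D m p01 q01) _.
have [_ N_le] := grp_size m; have /andP[p0 _] := p01.
by apply: le_trans (ler_wpM2l p0 N_le) _; rewrite -/s; nra.
Qed.
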